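(* Let $\eta>0$, $\alpha\in(0,1)$, $C\ge1$, and run the generalized share algorithm with the mixing rule $\hat p_{j,t}=(1-\alpha)v_{j,t}+\alpha\,w_{j,t}/Z_t$ for $t\ge2$, where $Z_t=\sum_{i=1}^dw_{i,t}$ and the nonnegative weights $w_{j,t}$ (which may depend on the past and current pre-weights) satisfy, for all $j=1,\dots,d$ and all $t\ge1$, $v_{j,t}\le w_{j,t}\le1$ and $C\,w_{j,t+1}\ge w_{j,t}$. Then for all $T\ge1$, all loss vectors $\ell_1,\dots,\ell_T\in[0,1]^d$ and all $u_1,\dots,u_T\in\mathbb R_+^d$, \[ \sum_{t=1}^T\|u_t\|_1\hat p_t^\top\ell_t-\sum_{t=1}^Tu_t^\top\ell_t\le\frac{n(u_1^T)\ln d}{\eta}+\frac{n(u_1^T)\,T\ln C}{\eta}+\frac\eta8\sum_{t=1}^T\|u_t\|_1+\frac{m(u_1^T)}{\eta}\ln\frac{\max_{t\le T}Z_t}{\alpha}+\frac{\sum_{t=2}^T\|u_t\|_1-m(u_1^T)}{\eta}\ln\frac1{1-\alpha}. \]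
   Context: Let $d\ge1$ and $\Delta_d=\{q\in[0,1]^d:\sum_{i=1}^d q_i=1\}$. The generalized share algorithm with learning rate $\eta>0$ and mixing functions $\psi_t:[0,1]^{td}\to\Delta_d$ ($t\ge2$) works as follows: $\hat p_1=v_1=(1/d,\dots,1/d)$. At each round $t=1,2,\dots$ it predicts $\hat p_t=(\hat p_{1,t},\dots,\hat p_{d,t})\in\Delta_d$, observes a loss vector $\ell_t=(\ell_{1,t},\dots,\ell_{d,t})\in[0,1]^d$ (arbitrary), and suffers loss $\hat p_t^\top\ell_t$. It then forms the pre-weights $v_{j,t+1}=\hat p_{j,t}e^{-\eta\ell_{j,t}}/\sum_{i=1}^d\hat p_{i,t}e^{-\eta\ell_{i,t}}$ for $j=1,\dots,d$, sets $v_{t+1}=(v_{1,t+1},\dots,v_{d,t+1})$, and defines $\hat p_{t+1}=\psi_{t+1}(V_{t+1})$ where $V_{t+1}=[v_{i,s}]_{1\le i\le d,1\le s\le t+1}$ is the $d\times(t+1)$ matrix of all pre-weights so far. For $x,y\in\mathbb R_+^d$, $D_{\mathrm{TV}}(x,y)=\sum_{i:\,x_i\ge y_i}(x_i-y_i)$; for $u_1,\dots,u_T\in\mathbb R_+^d$ (with $u_t=(u_{1,t},\dots,u_{d,t})$), $m(u_1^T)=\sum_{t=2}^T D_{\mathrm{TV}}(u_t,u_{t-1})$ and $n(u_1^T)=\sum_{i=1}^d\max_{1\le t\le T}u_{i,t}$. *)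

From Stdlib Require Import Reals.
Open Scope R_scope.

Fixpoint sumR (n : nat) (f : nat -> R) : R :=
  match n with
  | O => 0
  | S k => sumR k f + f k
  end.

(* maxR1 T f = max_{1 <= t <= T} f t  (0 when T = 0) *)
Fixpoint maxR1 (T : nat) (f : nat -> R) : R :=
  match T with
  | O => 0
  | S k => match k with
           | O => f 1%nat
           | _ => Rmax (maxR1 k f) (f (S k))
           end
  end.

(* vectors of R^d are functions nat -> R restricted to indices 0..d-1 *)
Definition norm1 (d : nat) (x : nat -> R) : R := sumR d (fun i => Rabs (x i)).

Definition dot (d : nat) (x y : nat -> R) : R := sumR d (fun i => x i * y i).

Definition DTV (d : nat) (x y : nat -> R) : R :=
  sumR d (fun i => if Rle_dec (y i) (x i) then x i - y i else 0).

(* sequences indexed by time t >= 1: u t is the vector u_t *)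
(* m(u_1^T) = sum_{t=2}^T D_TV(u_t, u_{t-1}) *)
Definition m_shift (d T : nat) (u : nat -> nat -> R) : R :=
  sumR (T - 1) (fun k => DTV d (u (k + 2)%nat) (u (k + 1)%nat)).

Definition n_max (d T : nat) (u : nat -> nat -> R) : R :=
  sumR d (fun i => maxR1 T (fun t => u t i)).

Definition sumT (T : nat) (f : nat -> R) : R := sumR T (fun k => f (k + 1)%nat).

Definition sumT2 (T : nat) (f : nat -> R) : R := sumR (T - 1) (fun k => f (k + 2)%nat).

From Stdlib Require Import Reals Lra Lia.
From Coquelicot Require Import Coquelicot.
Open Scope R_scope.

(* 1. Each round is an exponential-weights update, so by Hoeffding's lemma
      ||u_t|| p_t.l_t - u_t.l_t
        <= (1/eta) sum_i u_{i,t} (ln v_{i,t+1} - ln p_{i,t}) + (eta/8) ||u_t||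
      (lemma [round_regret]).
   2. For a fixed coordinate i, the sum over t of the logarithmic terms is
      bounded by an Abel summation ([abel_coordinate_bound]); it uses the
      lower bounds p_t >= (1-alpha) v_t and p_t >= alpha w_t / max Z, and
      the potential a_t = -ln w_{i,t}, which is nonnegative, starts below
      ln d, grows by at most ln C per round and dominates -ln v_{i,t}.
   3. Summing the coordinate bounds over i turns the increases of u into the
      total-variation shifts m(u_1^T) ([sum_coordinate_bounds]). *)

Lemma sumR_ext n f g :
  (forall i, (i < n)%nat -> f i = g i) -> sumR n f = sumR n g.
Proof.
  induction n as [|n IH]; intros H; simpl; [reflexivity|].
  rewrite IH by (intros; apply H; lia). rewrite H by lia. reflexivity.
Qed.

Lemma sumR_le n f g :
  (forall i, (i < n)%nat -> f i <= g i) -> sumR n f <= sumR n g.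
Proof.
  induction n as [|n IH]; intros H; simpl; [lra|].
  pose proof (H n ltac:(lia)). pose proof (IH ltac:(intros; apply H; lia)). lra.
Qed.

Lemma sumR_plus n f g : sumR n (fun i => f i + g i) = sumR n f + sumR n g.
Proof. induction n as [|n IH]; simpl; [ring|]. rewrite IH. ring. Qed.

Lemma sumR_minus n f g : sumR n (fun i => f i - g i) = sumR n f - sumR n g.
Proof. induction n as [|n IH]; simpl; [ring|]. rewrite IH. ring. Qed.

Lemma sumR_scal n c f : sumR n (fun i => c * f i) = c * sumR n f.
Proof. induction n as [|n IH]; simpl; [ring|]. rewrite IH. ring. Qed.

Lemma sumR_scal_r n c f : sumR n (fun i => f i * c) = sumR n f * c.
Proof. induction n as [|n IH]; simpl; [ring|]. rewrite IH. ring. Qed.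

Lemma sumR_const n c : sumR n (fun _ => c) = INR n * c.
Proof. induction n as [|n IH]; simpl sumR; [simpl; ring|]. rewrite IH, S_INR. ring. Qed.

Lemma sumR_swap n m (f : nat -> nat -> R) :
  sumR n (fun i => sumR m (fun j => f i j)) = sumR m (fun j => sumR n (fun i => f i j)).
Proof.
  induction n as [|n IH]; simpl.
  - induction m as [|m IHm]; simpl; [ring|]. rewrite <- IHm. ring.
  - rewrite IH, <- sumR_plus. reflexivity.
Qed.

Lemma sumR_nonneg n f : (forall i, (i < n)%nat -> 0 <= f i) -> 0 <= sumR n f.
Proof.
  intros H. rewrite <- (Rmult_0_r (INR n)), <- sumR_const. apply sumR_le. exact H.
Qed.

Lemma sumR_pos n f :
  (1 <= n)%nat -> (forall i, (i < n)%nat -> 0 < f i) -> 0 < sumR n f.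
Proof.
  destruct n as [|n]; [lia|]. intros _ H. simpl.
  pose proof (sumR_nonneg n f (fun i Hi => Rlt_le _ _ (H i ltac:(lia)))).
  pose proof (H n ltac:(lia)). lra.
Qed.

Lemma sumT_S T f : sumT T f = sumR T (fun k => f (S k)).
Proof. unfold sumT. apply sumR_ext. intros. f_equal. lia. Qed.

Lemma sumT2_S T f : sumT2 T f = sumR (T - 1) (fun k => f (S (S k))).
Proof. unfold sumT2. apply sumR_ext. intros. f_equal. lia. Qed.

Lemma m_shift_S d T u :
  m_shift d T u = sumR (T - 1) (fun k => DTV d (u (S (S k))) (u (S k))).
Proof. unfold m_shift. apply sumR_ext. intros. f_equal; f_equal; lia. Qed.

Lemma norm1_nonneg d x : (forall i, (i < d)%nat -> 0 <= x i) -> norm1 d x = sumR d x.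
Proof. intros H. apply sumR_ext. intros i Hi. apply Rabs_pos_eq, H, Hi. Qed.

Lemma maxR1_ge T f t : (1 <= t <= T)%nat -> f t <= maxR1 T f.
Proof.
  induction T as [|[|k] IH]; intros Ht; [lia| |].
  - simpl. replace t with 1%nat by lia. lra.
  - change (maxR1 (S (S k)) f) with (Rmax (maxR1 (S k) f) (f (S (S k)))).
    destruct (Nat.eq_dec t (S (S k))) as [->|Hne]; [apply Rmax_r|].
    eapply Rle_trans; [apply IH; lia|apply Rmax_l].
Qed.

Lemma le_of_derive_nonneg (f df : R -> R) (a b : R) :
  a <= b -> (forall x, is_derive f x (df x)) ->
  (forall x, a <= x <= b -> 0 <= df x) -> f a <= f b.
Proof.
  intros Hab Hder Hpos.
  destruct (MVT_gen f a b df) as [c [Hc Hmvt]].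
  - intros x _; apply Hder.
  - intros x _. apply continuity_pt_filterlim, (ex_derive_continuous f x).
    exists (df x); apply Hder.
  - rewrite Rmin_left, Rmax_right in Hc by lra.
    pose proof (Hpos c Hc). nra.
Qed.

Lemma bernoulli_mgf_pos mu x : 0 <= mu <= 1 -> 0 < 1 - mu + mu * exp x.
Proof. intros Hmu. pose proof (exp_pos x). nra. Qed.

(* The derivative q = mu e^x / mgf(x) of the log-mgf satisfies q' = q (1 - q)
   <= 1/4, hence q(c) - mu >= c/4 for c <= 0 (as q(0) = mu). *)
Lemma log_mgf_derivative_bound mu c : 0 <= mu <= 1 -> c <= 0 ->
  c / 4 <= mu * exp c / (1 - mu + mu * exp c) - mu.
Proof.
  intros Hmu Hc.
  set (q := fun x => mu * exp x / (1 - mu + mu * exp x)).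
  set (dq := fun x => mu * exp x * (1 - mu) / ((1 - mu + mu * exp x) ^ 2)).
  assert (Hslope : forall x, dq x <= 1 / 4).
  { intros x. pose proof (bernoulli_mgf_pos mu x Hmu) as HD. unfold dq.
    pose proof (exp_pos x).
    apply Rmult_le_reg_r with ((1 - mu + mu * exp x) ^ 2); [nra|].
    unfold Rdiv. rewrite Rmult_assoc, Rinv_l, Rmult_1_r by nra.
    replace ((1 - mu + mu * exp x) ^ 2)
      with ((1 - mu - mu * exp x) ^ 2 + 4 * (mu * exp x * (1 - mu))) by ring.
    pose proof (pow2_ge_0 (1 - mu - mu * exp x)).
    generalize dependent ((1 - mu - mu * exp x) ^ 2). intros. lra. }
  assert (Hle : c / 4 - q c <= 0 / 4 - q 0).
  { apply (le_of_derive_nonneg (fun x => x / 4 - q x) (fun x => 1 / 4 - dq x)); [lra| |].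
    - intros x. pose proof (bernoulli_mgf_pos mu x Hmu). unfold q, dq.
      auto_derive; [lra|]. field. lra.
    - intros x _. pose proof (Hslope x). lra. }
  unfold q in Hle. replace (1 - mu + mu * exp 0) with 1 in Hle by (rewrite exp_0; ring).
  rewrite exp_0 in Hle. lra.
Qed.

(* Hoeffding's lemma for a Bernoulli(mu) variable: the function
   s |-> ln mgf(s) - s mu - s^2/8 vanishes at 0 and is nondecreasing on s <= 0. *)
Lemma hoeffding_lemma mu s : 0 <= mu <= 1 -> s <= 0 ->
  ln (1 - mu + mu * exp s) <= s * mu + s * s / 8.
Proof.
  intros Hmu Hs.
  set (g := fun x => ln (1 - mu + mu * exp x) - x * mu - x * x / 8).
  assert (Hle : g s <= g 0).
  { apply (le_of_derive_nonneg g
             (fun x => mu * exp x / (1 - mu + mu * exp x) - mu - x / 4)); [lra| |].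
    - intros x. pose proof (bernoulli_mgf_pos mu x Hmu). unfold g.
      auto_derive; [lra|]. field. lra.
    - intros x Hx. pose proof (log_mgf_derivative_bound mu x Hmu ltac:(lra)). lra. }
  unfold g in Hle. replace (1 - mu + mu * exp 0) with 1 in Hle by (rewrite exp_0; ring).
  rewrite ln_1 in Hle. lra.
Qed.

Lemma exp_convex s x : 0 <= x <= 1 -> exp (s * x) <= 1 - x + x * exp s.
Proof.
  intros Hx.
  pose proof (exp_ineq1_le (- (s * x))). pose proof (exp_ineq1_le (s - s * x)).
  pose proof (exp_pos (s * x)).
  assert (E1 : exp (s * x) * exp (- (s * x)) = 1)
    by (rewrite <- exp_plus, Rplus_opp_r; apply exp_0).
  assert (E2 : exp (s * x) * exp (s - s * x) = exp s)
    by (rewrite <- exp_plus; f_equal; ring).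
  (* tangent-line bounds of exp at s x, evaluated at 0 and at s *)
  assert (A0 : exp (s * x) * (1 - s * x) <= 1)
    by (rewrite <- E1; apply Rmult_le_compat_l; lra).
  assert (A1 : exp (s * x) * (1 + (s - s * x)) <= exp s)
    by (rewrite <- E2; apply Rmult_le_compat_l; lra).
  assert (B : (1 - x) * (exp (s * x) * (1 - s * x)) + x * (exp (s * x) * (1 + (s - s * x)))
              <= (1 - x) * 1 + x * exp s)
    by (apply Rplus_le_compat; apply Rmult_le_compat_l; lra).
  replace ((1 - x) * (exp (s * x) * (1 - s * x)) + x * (exp (s * x) * (1 + (s - s * x))))
    with (exp (s * x)) in B by ring.
  lra.
Qed.

Definition pos_distrib (d : nat) (q : nat -> R) : Prop :=
  (forall i, (i < d)%nat -> 0 < q i) /\ sumR d q = 1.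

Lemma pos_distrib_ext d q r :
  (forall i, (i < d)%nat -> q i = r i) -> pos_distrib d q -> pos_distrib d r.
Proof.
  intros Hqr [Hpos Hsum]. split.
  - intros i Hi. rewrite <- Hqr by exact Hi. apply Hpos, Hi.
  - rewrite <- (sumR_ext d q r Hqr). exact Hsum.
Qed.

Lemma uniform_pos_distrib d : (1 <= d)%nat -> pos_distrib d (fun _ => 1 / INR d).
Proof.
  intros Hd. assert (0 < INR d) by (apply lt_0_INR; lia). split.
  - intros. apply Rdiv_lt_0_compat; lra.
  - rewrite sumR_const. field. lra.
Qed.

Lemma exp_weights_sum_pos d eta (q l : nat -> R) :
  pos_distrib d q -> 0 < sumR d (fun i => q i * exp (- eta * l i)).
Proof.
  intros [Hpos Hsum].
  assert (Hd : (1 <= d)%nat)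
    by (destruct d; [simpl in Hsum; lra|lia]).
  apply sumR_pos; [exact Hd|].
  intros i Hi. apply Rmult_lt_0_compat; [apply Hpos, Hi|apply exp_pos].
Qed.

Lemma log_mgf_bound d eta (q l : nat -> R) : 0 <= eta -> pos_distrib d q ->
  (forall i, (i < d)%nat -> 0 <= l i <= 1) ->
  ln (sumR d (fun i => q i * exp (- eta * l i))) <= - eta * dot d q l + eta * eta / 8.
Proof.
  intros Heta Hq Hl. pose proof (exp_weights_sum_pos d eta q l Hq) as HS.
  destruct Hq as [Hpos Hsum].
  set (mu := dot d q l).
  assert (Hmu : 0 <= mu <= 1).
  { unfold mu, dot. split.
    - apply sumR_nonneg. intros i Hi.
      apply Rmult_le_pos; [apply Rlt_le, Hpos, Hi|apply Hl, Hi].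
    - rewrite <- Hsum. apply sumR_le. intros i Hi.
      pose proof (Hpos i Hi). pose proof (Hl i Hi). nra. }
  assert (Hconv : sumR d (fun i => q i * exp (- eta * l i)) <= 1 - mu + mu * exp (- eta)).
  { rewrite <- Hsum. unfold mu, dot. rewrite <- sumR_scal_r, <- sumR_minus, <- sumR_plus.
    apply sumR_le. intros i Hi.
    pose proof (exp_convex (- eta) (l i) (Hl i Hi)). pose proof (Hpos i Hi). nra. }
  eapply Rle_trans; [apply ln_le; [exact HS|exact Hconv]|].
  pose proof (hoeffding_lemma mu (- eta) Hmu ltac:(lra)). nra.
Qed.

Lemma round_regret d eta (q l u q' : nat -> R) :
  0 < eta -> pos_distrib d q ->
  (forall i, (i < d)%nat -> 0 <= l i <= 1) -> (forall i, (i < d)%nat -> 0 <= u i) ->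
  (forall j, (j < d)%nat ->
     q' j = q j * exp (- eta * l j) / sumR d (fun i => q i * exp (- eta * l i))) ->
  norm1 d u * dot d q l - dot d u l
  <= / eta * sumR d (fun i => u i * (ln (q' i) - ln (q i))) + eta / 8 * norm1 d u.
Proof.
  intros Heta Hq Hl Hu Hq'.
  pose proof (exp_weights_sum_pos d eta q l Hq) as HS.
  pose proof (log_mgf_bound d eta q l ltac:(lra) Hq Hl) as Hlog.
  set (S := sumR d (fun i => q i * exp (- eta * l i))) in *.
  assert (Hprogress : sumR d (fun i => u i * (ln (q' i) - ln (q i)))
                      = - eta * dot d u l + - ln S * sumR d u).
  { unfold dot. rewrite <- !sumR_scal, <- sumR_plus. apply sumR_ext. intros i Hi.
    destruct Hq as [Hpos _]. pose proof (Hpos i Hi).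
    pose proof (exp_pos (- eta * l i)).
    rewrite Hq' by exact Hi.
    rewrite ln_div, ln_mult, ln_exp by (try apply Rmult_lt_0_compat; assumption).
    ring. }
  rewrite Hprogress, norm1_nonneg by exact Hu.
  assert (HU : 0 <= sumR d u) by (apply sumR_nonneg; exact Hu).
  assert (Hscaled : sumR d u * ln S <= sumR d u * (- eta * dot d q l + eta * eta / 8))
    by (apply Rmult_le_compat_l; assumption).
  apply (Rmult_le_reg_l eta); [exact Heta|].
  rewrite Rmult_plus_distr_l, <- Rmult_assoc, Rinv_r, Rmult_1_l by lra. nra.
Qed.

(* [increase a b] = max (b - a, 0); summed over coordinates it is [DTV]. *)
Definition increase (a b : R) : R := if Rle_dec a b then b - a else 0.

(* Price paid at a round where the comparator weight moves from a to b:
   fresh mass (the increase) costs K, retained mass costs J. *)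
Definition shift_cost (K J a b : R) : R := increase a b * K + (b - increase a b) * J.

Lemma abel_rearrangement (u x y : nat -> R) n :
  sumR (S n) (fun k => u (S k) * (x (S (S k)) - y (S k)))
  = - u 1%nat * y 1%nat
    + sumR n (fun k => u (S k) * x (S (S k)) - u (S (S k)) * y (S (S k)))
    + u (S n) * x (S (S n)).
Proof.
  induction n as [|n IH].
  - simpl. ring.
  - change (sumR (S (S n)) (fun k => u (S k) * (x (S (S k)) - y (S k))))
      with (sumR (S n) (fun k => u (S k) * (x (S (S k)) - y (S k)))
            + u (S (S n)) * (x (S (S (S n))) - y (S (S n)))).
    rewrite IH. simpl sumR. ring.
Qed.

Lemma abel_step (ua ub x y a K J : R) :
  0 <= ua -> 0 <= ub -> x - y <= J -> - y <= K + a -> x <= - a ->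
  ua * x - ub * y <= shift_cost K J ua ub + (ub - ua) * a.
Proof.
  intros Hua Hub Hxy Hy Hx. unfold shift_cost, increase.
  destruct (Rle_dec ua ub) as [Hle|Hlt].
  - assert (ua * (x - y) <= ua * J) by (apply Rmult_le_compat_l; lra).
    assert ((ub - ua) * (- y) <= (ub - ua) * (K + a)) by (apply Rmult_le_compat_l; lra).
    nra.
  - assert (ub * (x - y) <= ub * J) by (apply Rmult_le_compat_l; lra).
    assert ((ua - ub) * x <= (ua - ub) * (- a)) by (apply Rmult_le_compat_l; lra).
    nra.
Qed.

(* The invariant adds (M - u_n) a_n >= 0, which grows by at most M lC. *)
Lemma potential_bound (u a : nat -> R) (M Ld lC : R) n :
  (forall t, (1 <= t <= S n)%nat -> 0 <= u t <= M) ->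
  a 1%nat <= Ld -> (forall t, (1 <= t)%nat -> 0 <= a t) ->
  (forall t, (1 <= t)%nat -> a (S t) <= a t + lC) -> 0 <= lC ->
  u 1%nat * Ld + sumR n (fun k => (u (S (S k)) - u (S k)) * a (S (S k)))
  <= M * Ld + M * INR n * lC.
Proof.
  intros Hu Ha1 Ha0 Hgrowth HlC.
  assert (Hinv : forall k, (k <= n)%nat ->
            u 1%nat * Ld + sumR k (fun j => (u (S (S j)) - u (S j)) * a (S (S j)))
            + (M - u (S k)) * a (S k) <= M * Ld + M * INR k * lC).
  { induction k as [|k IH]; intros Hk.
    - pose proof (Hu 1%nat ltac:(lia)).
      assert ((M - u 1%nat) * a 1%nat <= (M - u 1%nat) * Ld)
        by (apply Rmult_le_compat_l; lra).
      simpl. lra.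
    - pose proof (IH ltac:(lia)). pose proof (Hu (S k) ltac:(lia)).
      pose proof (Hgrowth (S k) ltac:(lia)).
      assert ((M - u (S k)) * (a (S (S k)) - a (S k)) <= (M - u (S k)) * lC)
        by (apply Rmult_le_compat_l; lra).
      assert (0 <= u (S k) * lC) by (apply Rmult_le_pos; lra).
      simpl sumR. rewrite S_INR. nra. }
  pose proof (Hinv n (Nat.le_refl n)). pose proof (Hu (S n) ltac:(lia)).
  assert (0 <= (M - u (S n)) * a (S n)) by (apply Rmult_le_pos; [lra|apply Ha0; lia]).
  lra.
Qed.

Lemma abel_coordinate_bound (T : nat) (u x y a : nat -> R) (M Ld lC K J : R) :
  (1 <= T)%nat ->
  (forall t, (1 <= t <= T)%nat -> 0 <= u t <= M) ->
  x (S T) <= 0 -> y 1%nat = - Ld -> a 1%nat <= Ld ->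
  (forall t, (1 <= t)%nat -> 0 <= a t) ->
  (forall t, (1 <= t)%nat -> a (S t) <= a t + lC) -> 0 <= lC ->
  (forall t, (2 <= t <= T)%nat -> x t - y t <= J /\ - y t <= K + a t /\ x t <= - a t) ->
  sumR T (fun k => u (S k) * (x (S (S k)) - y (S k)))
  <= M * Ld + M * INR T * lC
     + sumR (T - 1) (fun k => shift_cost K J (u (S k)) (u (S (S k)))).
Proof.
  intros HT Hu Hlast Hy1 Ha1 Ha0 Hgrowth HlC Hround.
  destruct T as [|n]; [lia|].
  rewrite abel_rearrangement, Hy1. replace (S n - 1)%nat with n by lia.
  assert (Hsteps :
    sumR n (fun k => u (S k) * x (S (S k)) - u (S (S k)) * y (S (S k)))
    <= sumR n (fun k => shift_cost K J (u (S k)) (u (S (S k))))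
       + sumR n (fun k => (u (S (S k)) - u (S k)) * a (S (S k)))).
  { rewrite <- sumR_plus. apply sumR_le. intros k Hk.
    destruct (Hround (S (S k)) ltac:(lia)) as [Hxy [Hy Hx]].
    apply abel_step; try assumption; apply Hu; lia. }
  pose proof (potential_bound u a M Ld lC n Hu Ha1 Ha0 Hgrowth HlC).
  pose proof (Hu (S n) ltac:(lia)).
  assert (0 <= u (S n) * - x (S (S n))) by (apply Rmult_le_pos; lra).
  assert (0 <= M * lC) by (apply Rmult_le_pos; lra).
  rewrite S_INR. nra.
Qed.

Lemma sum_shift_cost d K J (x y : nat -> R) :
  (forall i, (i < d)%nat -> 0 <= y i) ->
  sumR d (fun i => shift_cost K J (x i) (y i))
  = DTV d y x * K + (norm1 d y - DTV d y x) * J.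
Proof.
  intros Hy. unfold shift_cost.
  rewrite sumR_plus, !sumR_scal_r, sumR_minus, norm1_nonneg by exact Hy.
  reflexivity.
Qed.

Lemma sum_coordinate_bounds d T (u : nat -> nat -> R) (s : nat -> R) (Ld lC K J : R) :
  (forall t i, (1 <= t <= T)%nat -> (i < d)%nat -> 0 <= u t i) ->
  (forall i, (i < d)%nat ->
     s i <= maxR1 T (fun t => u t i) * Ld + maxR1 T (fun t => u t i) * INR T * lC
            + sumR (T - 1) (fun k => shift_cost K J (u (S k) i) (u (S (S k)) i))) ->
  sumR d s <= n_max d T u * Ld + n_max d T u * INR T * lC
              + m_shift d T u * K + (sumT2 T (fun t => norm1 d (u t)) - m_shift d T u) * J.
Proof.
  intros Hu Hs. eapply Rle_trans; [apply sumR_le; exact Hs|].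
  rewrite !sumR_plus, !sumR_scal_r, sumR_swap, m_shift_S, sumT2_S.
  rewrite (sumR_ext (T - 1)
              (fun k => sumR d (fun i => shift_cost K J (u (S k) i) (u (S (S k)) i)))
              (fun k => DTV d (u (S (S k))) (u (S k)) * K
              + (norm1 d (u (S (S k))) - DTV d (u (S (S k))) (u (S k))) * J)).
  - rewrite sumR_plus, !sumR_scal_r, sumR_minus. unfold n_max. lra.
  - intros k Hk. apply sum_shift_cost. intros i Hi. apply Hu; [lia|exact Hi].
Qed.

Lemma exp_update_pos_distrib d eta (q l : nat -> R) :
  pos_distrib d q ->
  pos_distrib d (fun j => q j * exp (- eta * l j) / sumR d (fun i => q i * exp (- eta * l i))).
Proof.
  intros Hq. pose proof (exp_weights_sum_pos d eta q l Hq) as HS.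
  destruct Hq as [Hpos _]. split.
  - intros j Hj. apply Rdiv_lt_0_compat; [|exact HS].
    apply Rmult_lt_0_compat; [apply Hpos, Hj|apply exp_pos].
  - unfold Rdiv. rewrite sumR_scal_r. field. lra.
Qed.

Lemma mixing_pos_distrib d alpha (q w : nat -> R) :
  0 < alpha < 1 -> pos_distrib d q -> (forall i, (i < d)%nat -> q i <= w i) ->
  pos_distrib d (fun j => (1 - alpha) * q j + alpha * w j / sumR d w).
Proof.
  intros Halpha [Hpos Hsum] Hqw.
  assert (HZ : 1 <= sumR d w) by (rewrite <- Hsum; apply sumR_le; exact Hqw).
  split.
  - intros j Hj. pose proof (Hpos j Hj). pose proof (Hqw j Hj).
    assert (0 <= alpha * w j / sumR d w)
      by (apply Rmult_le_pos; [nra|apply Rlt_le, Rinv_0_lt_compat; lra]).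
    nra.
  - unfold Rdiv. rewrite sumR_plus, sumR_scal, sumR_scal_r, sumR_scal, Hsum. field. lra.
Qed.

Section ShareWithWeights.

Variables (d : nat) (eta alpha C : R) (p v w l : nat -> nat -> R).
Hypothesis Hd : (1 <= d)%nat.
Hypothesis Halpha : 0 < alpha < 1.
Hypothesis HC : 1 <= C.
Hypothesis Hv1 : forall i, (i < d)%nat -> v 1%nat i = 1 / INR d.
Hypothesis Hp1 : forall i, (i < d)%nat -> p 1%nat i = v 1%nat i.
Hypothesis Hv : forall t j, (1 <= t)%nat -> (j < d)%nat ->
  v (S t) j = p t j * exp (- eta * l t j) / sumR d (fun i => p t i * exp (- eta * l t i)).
Hypothesis Hp : forall t j, (2 <= t)%nat -> (j < d)%nat ->
  p t j = (1 - alpha) * v t j + alpha * w t j / sumR d (w t).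
Hypothesis Hwv : forall t j, (1 <= t)%nat -> (j < d)%nat -> v t j <= w t j <= 1.
Hypothesis HwC : forall t j, (1 <= t)%nat -> (j < d)%nat -> C * w (S t) j >= w t j.

Lemma share_pos_distrib n : pos_distrib d (v (S n)) /\ pos_distrib d (p (S n)).
Proof.
  induction n as [|n [_ Hpn]].
  - assert (Hv1d : pos_distrib d (v 1%nat)).
    { apply (pos_distrib_ext d (fun _ => 1 / INR d)).
      - intros i Hi. symmetry. apply Hv1, Hi.
      - apply uniform_pos_distrib, Hd. }
    split; [exact Hv1d|].
    apply (pos_distrib_ext d (v 1%nat)); [|exact Hv1d].
    intros i Hi. symmetry. apply Hp1, Hi.
  - assert (Hvn : pos_distrib d (v (S (S n)))).
    { apply (pos_distrib_ext d _ _ (fun j Hj => eq_sym (Hv (S n) j ltac:(lia) Hj))).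
      apply exp_update_pos_distrib, Hpn. }
    split; [exact Hvn|].
    apply (pos_distrib_ext d _ _ (fun j Hj => eq_sym (Hp (S (S n)) j ltac:(lia) Hj))).
    apply mixing_pos_distrib; [exact Halpha|exact Hvn|].
    intros i Hi. apply Hwv; [lia|exact Hi].
Qed.

Lemma share_p_pos_distrib t : (1 <= t)%nat -> pos_distrib d (p t).
Proof. intros Ht. destruct t as [|n]; [lia|]. apply share_pos_distrib. Qed.

Lemma share_v_pos t i : (1 <= t)%nat -> (i < d)%nat -> 0 < v t i.
Proof. intros Ht Hi. destruct t as [|n]; [lia|]. apply share_pos_distrib, Hi. Qed.

Lemma share_w_pos t i : (1 <= t)%nat -> (i < d)%nat -> 0 < w t i.
Proof. intros Ht Hi. pose proof (share_v_pos t i Ht Hi). pose proof (Hwv t i Ht Hi). lra. Qed.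

Lemma mixing_lower_bounds t i : (2 <= t)%nat -> (i < d)%nat ->
  (1 - alpha) * v t i <= p t i /\ alpha * w t i / sumR d (w t) <= p t i.
Proof.
  intros Ht Hi. rewrite Hp by assumption.
  pose proof (share_v_pos t i ltac:(lia) Hi). pose proof (share_w_pos t i ltac:(lia) Hi).
  assert (0 < sumR d (w t)) by (apply sumR_pos; [exact Hd|intros; apply share_w_pos; lia]).
  assert (0 <= alpha * w t i / sumR d (w t))
    by (apply Rmult_le_pos; [nra|apply Rlt_le, Rinv_0_lt_compat; lra]).
  split; nra.
Qed.

(* Coordinate i of the logarithmic progress, via [abel_coordinate_bound] with
   the potential a_t = -ln w_{i,t}, K = ln (Zmax / alpha), J = ln (1 / (1 - alpha)). *)
Lemma share_coordinate_bound (T : nat) (u : nat -> R) (M Zmax : R) (i : nat) :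
  (1 <= T)%nat -> (i < d)%nat -> (forall t, (1 <= t <= T)%nat -> 0 <= u t <= M) ->
  (forall t, (1 <= t <= T)%nat -> sumR d (w t) <= Zmax) ->
  sumR T (fun k => u (S k) * (ln (v (S (S k)) i) - ln (p (S k) i)))
  <= M * ln (INR d) + M * INR T * ln C
     + sumR (T - 1) (fun k => shift_cost (ln (Zmax / alpha)) (ln (1 / (1 - alpha)))
                                          (u (S k)) (u (S (S k)))).
Proof.
  intros HT Hi Hu HZmax.
  assert (HdR : 0 < INR d) by (apply lt_0_INR; lia).
  assert (Hw_le : forall t, (1 <= t)%nat -> ln (w t i) <= 0).
  { intros t Ht. rewrite <- ln_1. apply ln_le; [apply share_w_pos; auto|apply Hwv; auto]. }
  assert (HZpos : forall t, (1 <= t)%nat -> 0 < sumR d (w t))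
    by (intros t Ht; apply sumR_pos; [exact Hd|intros; apply share_w_pos; auto]).
  assert (HZmax_pos : 0 < Zmax)
    by (pose proof (HZmax 1%nat ltac:(lia)); pose proof (HZpos 1%nat ltac:(lia)); lra).
  apply (abel_coordinate_bound T u (fun t => ln (v t i)) (fun t => ln (p t i))
           (fun t => - ln (w t i))); try assumption.
  -
    rewrite <- ln_1. apply ln_le; [apply share_v_pos; auto; lia|].
    pose proof (Hwv (S T) i ltac:(lia) Hi). lra.
  - rewrite Hp1, Hv1, ln_div, ln_1 by (auto; lra). ring.
  - (* the potential starts below ln d since w_1 >= v_1 = 1/d *)
    assert (Hstart : ln (1 / INR d) <= ln (w 1%nat i)).
    { apply ln_le; [apply Rdiv_lt_0_compat; lra|]. rewrite <- (Hv1 i Hi). apply Hwv; auto. }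
    rewrite ln_div, ln_1 in Hstart by lra. lra.
  - intros t Ht. pose proof (Hw_le t Ht). lra.
  -
    intros t Ht. pose proof (share_w_pos (S t) i ltac:(lia) Hi).
    assert (Hgrowth : ln (w t i) <= ln (C * w (S t) i)).
    { apply ln_le; [apply share_w_pos; auto|]. pose proof (HwC t i Ht Hi). lra. }
    rewrite ln_mult in Hgrowth by lra. lra.
  - rewrite <- ln_1. apply ln_le; lra.
  - intros t Ht. pose proof (share_v_pos t i ltac:(lia) Hi).
    pose proof (share_w_pos t i ltac:(lia) Hi). pose proof (HZmax t ltac:(lia)).
    pose proof (HZpos t ltac:(lia)).
    destruct (mixing_lower_bounds t i ltac:(lia) Hi) as [Hfixed Hshared].
    assert (Hshared' : alpha * w t i / Zmax <= p t i).
    { eapply Rle_trans; [|exact Hshared]. unfold Rdiv.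
      apply Rmult_le_compat_l; [nra|]. apply Rinv_le_contravar; lra. }
    split; [|split].
    + assert (Hlog : ln ((1 - alpha) * v t i) <= ln (p t i)) by (apply ln_le; nra).
      rewrite ln_mult in Hlog by lra. rewrite ln_div, ln_1 by lra. lra.
    + assert (Hlog : ln (alpha * w t i / Zmax) <= ln (p t i))
        by (apply ln_le; [apply Rdiv_lt_0_compat; nra|exact Hshared']).
      rewrite ln_div, ln_mult in Hlog by nra. rewrite ln_div by lra. lra.
    + rewrite Ropp_involutive. apply ln_le; [lra|apply Hwv; auto; lia].
Qed.

End ShareWithWeights.

Theorem theorem3 (d : nat) (eta alpha C : R) (T : nat)
  (p v w l u : nat -> nat -> R)
  (Hd : (1 <= d)%nat) (Heta : 0 < eta) (Halpha : 0 < alpha < 1) (HC : 1 <= C)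
  (HT : (1 <= T)%nat)
  (Hl : forall t i, (1 <= t <= T)%nat -> (i < d)%nat -> 0 <= l t i <= 1)
  (Hu : forall t i, (1 <= t <= T)%nat -> (i < d)%nat -> 0 <= u t i)
  (Hv1 : forall i, (i < d)%nat -> v 1%nat i = 1 / INR d)
  (Hp1 : forall i, (i < d)%nat -> p 1%nat i = v 1%nat i)
  (Hv : forall t j, (1 <= t)%nat -> (j < d)%nat ->
     v (S t) j = p t j * exp (- eta * l t j) /
                 sumR d (fun i => p t i * exp (- eta * l t i)))
  (Hp : forall t j, (2 <= t)%nat -> (j < d)%nat ->
     p t j = (1 - alpha) * v t j + alpha * w t j / sumR d (w t))
  (Hw0 : forall t j, (1 <= t)%nat -> (j < d)%nat -> 0 <= w t j)
  (Hwv : forall t j, (1 <= t)%nat -> (j < d)%nat -> v t j <= w t j <= 1)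
  (HwC : forall t j, (1 <= t)%nat -> (j < d)%nat -> C * w (S t) j >= w t j) :
  sumT T (fun t => norm1 d (u t) * dot d (p t) (l t)) - sumT T (fun t => dot d (u t) (l t))
  <= n_max d T u * ln (INR d) / eta
     + n_max d T u * INR T * ln C / eta
     + eta / 8 * sumT T (fun t => norm1 d (u t))
     + m_shift d T u / eta * ln (maxR1 T (fun t => sumR d (w t)) / alpha)
     + (sumT2 T (fun t => norm1 d (u t)) - m_shift d T u) / eta * ln (1 / (1 - alpha)).
Proof.
  set (K := ln (maxR1 T (fun t => sumR d (w t)) / alpha)).
  set (J := ln (1 / (1 - alpha))).
  set (progress := fun t i => ln (v (S t) i) - ln (p t i)).
  assert (Hround : forall k, (k < T)%nat ->
    norm1 d (u (S k)) * dot d (p (S k)) (l (S k)) - dot d (u (S k)) (l (S k))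
    <= / eta * sumR d (fun i => u (S k) i * progress (S k) i) + eta / 8 * norm1 d (u (S k))).
  { intros k Hk. apply round_regret; [exact Heta| | | |].
    - apply (share_p_pos_distrib d eta alpha p v w l Hd Halpha Hv1 Hp1 Hv Hp Hwv); lia.
    - intros i Hi. apply Hl; [lia|exact Hi].
    - intros i Hi. apply Hu; [lia|exact Hi].
    - intros j Hj. apply Hv; [lia|exact Hj]. }
  assert (Hprogress :
    sumR d (fun i => sumR T (fun k => u (S k) i * progress (S k) i))
    <= n_max d T u * ln (INR d) + n_max d T u * INR T * ln C
       + m_shift d T u * K + (sumT2 T (fun t => norm1 d (u t)) - m_shift d T u) * J).
  { apply sum_coordinate_bounds; [exact Hu|]. intros i Hi.
    apply (share_coordinate_bound d eta alpha C p v w l Hd Halpha HC Hv1 Hp1 Hv Hp Hwv HwC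
             T (fun t => u t i) _ _ i HT Hi).
    - intros t Ht. split; [apply Hu; auto|]. apply (maxR1_ge T (fun t => u t i)), Ht.
    - intros t Ht. apply (maxR1_ge T (fun t => sumR d (w t))), Ht. }
  rewrite !sumT_S, <- sumR_minus.
  eapply Rle_trans; [apply sumR_le; exact Hround|].
  rewrite sumR_plus, !sumR_scal, sumR_swap.
  apply (Rmult_le_compat_l (/ eta)) in Hprogress; [|apply Rlt_le, Rinv_0_lt_compat, Heta].
  unfold Rdiv. lra.
Qed.
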